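(* There exists an integer $g_0$ with the following property. Let $g\ge g_0$ and let $\mathfrak g$ be a semisimple complex Lie algebra with inclusions $\mathfrak{sp}(2g-10)\subset\mathfrak g\subset\mathfrak{sp}(4g-4)$ such that the composite inclusion $\mathfrak{sp}(2g-10)\subset\mathfrak{sp}(4g-4)$ is the linear embedding given by the diagonal action on the direct sum of two copies of the standard representation of $\mathfrak{sp}(2g-10)$ (plus a trivial complement). Suppose that the action of $\mathfrak g$ on $\mathbb C^{4g-4}$ is irreducible, and that $\mathfrak g$ contains an element $A$ which acts on $\mathbb C^{4g-4}$ as a nilpotent endomorphism with exactly one nontrivial Jordan block, that block having size $2$ (i.e. $A$ is nilpotent of rank one). Then $\mathfrak g=\mathfrak{sp}(4g-4)$. *)

From HB Require Import structures.
From mathcomp Require Import all_boot all_order all_algebra.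
From mathcomp Require Import complex.
From mathcomp Require Import reals.
Set Implicit Arguments. Unset Strict Implicit. Unset Printing Implicit Defensive.
Import Order.TTheory GRing.Theory Num.Theory.
Local Open Scope ring_scope.

Section LieDefs.
Variable K : fieldType.
Variable N : nat.

Definition comm (A B : 'M[K]_N) : 'M[K]_N := A *m B - B *m A.

Definition lie_subalgebra (L : {vspace 'M[K]_N}) : Prop :=
  forall A B, A \in L -> B \in L -> comm A B \in L.

Definition lie_ideal (I L : {vspace 'M[K]_N}) : Prop :=
  (I <= L)%VS /\ forall A B, A \in L -> B \in I -> comm A B \in I.

(* derived algebra [I,I] = span of all brackets (by bilinearity, of brackets of basis elements) *)
Definition derived (I : {vspace 'M[K]_N}) : {vspace 'M[K]_N} :=
  <<[seq comm a b | a <- vbasis I, b <- vbasis I]>>%VS.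

Definition lie_solvable (I : {vspace 'M[K]_N}) : Prop :=
  exists k, iter k derived I = 0%VS.

Definition lie_semisimple (L : {vspace 'M[K]_N}) : Prop :=
  forall I, lie_ideal I L -> lie_solvable I -> I = 0%VS.

Definition irreducible_action (L : {vspace 'M[K]_N}) : Prop :=
  forall U : {vspace 'cV[K]_N},
    (forall A v, A \in L -> v \in U -> A *m v \in U) ->
    U = 0%VS \/ U = fullv.

Definition nilpotent_mx (A : 'M[K]_N) : Prop :=
  exists k, iter k (mulmx A) 1%:M = 0.

(* standard symplectic form J = [[0, I],[-I, 0]] on K^N (N even) *)
Definition Jmat : 'M[K]_N :=
  \matrix_(i < N, j < N) (if (j == i + N./2 :> nat)%N then 1
                  else if (i == j + N./2 :> nat)%N then -1 else 0).

Definition is_sp (X : 'M[K]_N) : Prop := X^T *m Jmat + Jmat *m X = 0.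
End LieDefs.

Definition mxf (K : fieldType) (n : nat) (X : 'M[K]_n) (a b : nat) : K :=
  match (insub a : option 'I_n), (insub b : option 'I_n) with
  | Some i, Some j => X i j
  | _, _ => 0
  end.

(* Decomposition of K^N (N = 2k, basis e_0..e_{k-1}, f_0..f_{k-1} = e_k..e_{2k-1})
   as V (+) V (+) W with V = K^(2m) standard symplectic:
   copy 0 spanned by e_0..e_{m-1}, f_0..f_{m-1};
   copy 1 spanned by e_m..e_{2m-1}, f_m..f_{2m-1};
   W spanned by the remaining basis vectors (trivial complement).
   pos k m i = Some (c, a) : global index i is the local index a of copy c. *)
Definition pos (k m i : nat) : option (bool * nat) :=
  if (i < k)%N then
    (if (i < m)%N then Some (false, i)
     else if (i < 2 * m)%N then Some (true, (i - m)%N) else None)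
  else
    let i' := (i - k)%N in
    if (i' < m)%N then Some (false, (m + i')%N)
    else if (i' < 2 * m)%N then Some (true, i') else None.

(* the embedding sp(2m) -> sp(N): diagonal action on two copies of the standard
   representation, trivial on the complement *)
Definition emb (K : fieldType) (N m : nat) (X : 'M[K]_(2 * m)) : 'M[K]_N :=
  \matrix_(i < N, j < N)
    match pos N./2 m i, pos N./2 m j with
    | Some (c, a), Some (d, b) => if c == d then mxf X a b else 0
    | _, _ => 0
    end.

From HB Require Import structures.
From mathcomp Require Import all_boot all_order all_algebra.
From mathcomp Require Import complex.
From mathcomp Require Import reals.
From mathcomp Require Import ring zify.
From Stdlib Require Import Classical.
Set Implicit Arguments. Unset Strict Implicit. Unset Printing Implicit Defensive.
Import Order.TTheory GRing.Theory Num.Theory.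
Local Open Scope ring_scope.

(* Irreducibility, L ⊆ sp(V) and the rank-one element already force
   L = sp(V).
   Let ω be the symplectic form and a⊙b : x ↦ ω(b,x) a + ω(a,x) b; a rank-one
   element of sp(V) is a multiple of some w⊙w.  If ω(Xw, w) ≠ 0 for some
   X ∈ L, brackets of X with w⊙w give u⊙u and u⊙w for u = Xw, where
   ω(u, w) ≠ 0.  Further brackets show that the a with w⊙a ∈ L form an
   L-invariant subspace containing w, hence all of V; then every a⊙b lies in
   L, and these span sp(V).  Otherwise ω(Xw, w) = 0 for all X ∈ L.  Expanding
   ad_Z^(2k) (w⊙w) gives ω(Z^k w, w)² = 0 for Z ∈ L, and since a product of
   k elements of L is symmetric in its factors modulo shorter products,
   polarization gives ω(Bw, w) = 0 for every product B of elements of L.  So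
   the L-module generated by w is orthogonal to w, contradicting
   irreducibility. *)

Lemma sum_superset_sign (R : comNzRingType) (T : finType) (S : {set T}) :
  \sum_(E : {set T} | S \subset E) (-1) ^+ #|~: E| = (S == setT)%:R :> R.
Proof.
pose G i : R := if i \in S then 0 else -1.
have prodG : \prod_i (1 + G i) = (S == setT)%:R.
  have [ST|] := eqVneq S setT.
    by apply: big1 => i _; rewrite /G ST inE addr0.
  rewrite eqEsubset subsetT /= => /subsetPn [i _ iNS].
  by rewrite (bigD1 i) //= /G (negbTE iNS) subrr mul0r.
rewrite -prodG bigA_distr big_mkcond /=; apply: eq_bigr => E _.
have [sSE|/subsetPn [i iS iNE]] := boolP (S \subset E); last first.
  by rewrite (bigD1 i) //= (negbTE iNE) /G iS mul0r.
rewrite (bigID (mem E)) /= big1 ?mul1r => [|i ->] //.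
rewrite -prodr_const; apply: eq_big => i; first by rewrite !inE.
rewrite inE /G => /negbTE iNE; rewrite iNE.
by case: ifP => // iS; rewrite (subsetP sSE i iS) in iNE.
Qed.

Lemma polarization (R : comNzRingType) (A : lalgType R) k (X : 'I_k -> A) :
  \sum_(E : {set 'I_k}) (-1) ^+ #|~: E| *: (\sum_(i in E) X i) ^+ k =
  \sum_(f : {ffun 'I_k -> 'I_k} | f @: setT == setT) \prod_(j < k) X (f j).
Proof.
under eq_bigr => E _.
  rewrite -[(\sum_(i in E) X i) ^+ k]iter_mulr_1 -big_const_ord bigA_distr_big.
  rewrite scaler_sumr big_mkcond.
  over.
rewrite exchange_big [RHS]big_mkcond; apply: eq_bigr => f _ /=.
transitivity ((f @: setT == setT)%:R *: \prod_(j < k) X (f j)); last first.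
  by case: eqP; rewrite ?scale1r ?scale0r.
rewrite -sum_superset_sign scaler_suml [RHS]big_mkcond; apply: eq_bigr => E _ /=.
suff -> : (f \in ffun_on (mem E)) = (f @: setT \subset E) by case: ifP.
apply/ffun_onP/subsetP => [fE _ /imsetP [j _ ->] | fE j]; first exact: fE.
by apply/fE/imset_f.
Qed.

Lemma perm_map_onto (T : finType) (f : T -> T) :
  f @: setT == setT -> perm_eq [seq f i | i <- index_enum T] (index_enum T).
Proof.
move=> /eqP ontof.
have /imset_injP finj : #|f @: setT| == #|[set: T]| by rewrite ontof.
apply: uniq_perm; rewrite ?index_enum_uniq //.
  by rewrite map_inj_uniq ?index_enum_uniq // => x y /finj; apply; rewrite inE.
move=> x; rewrite mem_index_enum; have : x \in f @: setT by rewrite ontof inE.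
by case/imsetP => y _ ->; rewrite map_f ?mem_index_enum.
Qed.

Lemma sum_binomS (R : nzRingType) (U : lmodType R) (F : nat -> U) m :
  \sum_(j < m.+1) 'C(m, j)%:R *: (F j.+1 + F j) =
  \sum_(j < m.+2) 'C(m.+1, j)%:R *: F j.
Proof.
rewrite [RHS]big_ord_recl /= bin0 scale1r.
under [in RHS]eq_bigr do rewrite /bump leq0n add1n binS natrD scalerDl.
rewrite [in RHS]big_split /=.
under eq_bigr do rewrite scalerDr.
rewrite big_split /= [X in _ = _ + X]addrC addrCA; congr (_ + _).
rewrite big_ord_recl /= bin0 scale1r; congr (_ + _).
rewrite [RHS]big_ord_recr /= bin_small // scale0r addr0.
by apply: eq_bigr => i _; rewrite /bump leq0n add1n.
Qed.

Lemma vspace_of_pred (K : fieldType) (vT : vectType K) (P : vT -> Prop) :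
  P 0 -> (forall k x y, P x -> P y -> P (k *: x + y)) ->
  exists U : {vspace vT}, forall v, v \in U <-> P v.
Proof.
move=> P0 Plin.
suff grow d : exists U : {vspace vT}, (forall v, v \in U -> P v) /\
    ((d <= \dim U)%N \/ forall v, P v -> v \in U).
  have [U [UP [dimU|PU]]] := grow (\dim {:vT}).+1.
    by have := dimvS (subvf U); rewrite leqNgt (leq_trans _ dimU).
  by exists U => v; split; [apply: UP | apply: PU].
elim: d => [|d [U [UP [dimU|PU]]]]; last by exists U; split=> //; right.
  by exists 0%VS; split; [move=> v; rewrite memv0 => /eqP -> | left].
have [PU|/not_all_ex_not [v]] := classic (forall v, P v -> v \in U).
  by exists U; split=> //; right.
move=> nPU; have [Pv vNU] := imply_to_and _ _ nPU.
exists (U + <[v]>)%VS; split.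
  move=> x /memv_addP [y yU [z /vlineP [k ->] ->]].
  by rewrite addrC; apply: Plin => //; apply: UP.
left; apply: leq_ltn_trans dimU _.
rewrite (ltn_leqif (dimv_leqif_sup (addvSl U <[v]>))).
apply: contra_notN vNU => /subvP; apply.
by have := memv_add (mem0v U) (memv_line v); rewrite add0r.
Qed.


Lemma irreducible_pred (K : fieldType) N (L : {vspace 'M[K]_N})
    (P : 'cV[K]_N -> Prop) w :
  irreducible_action L -> P 0 -> (forall k x y, P x -> P y -> P (k *: x + y)) ->
  (forall X v, X \in L -> P v -> P (X *m v)) -> w != 0 -> P w -> forall v, P v.
Proof.
move=> Lirr P0 Plin PL wn0 Pw v.
have [U memU] := vspace_of_pred P0 Plin.
have [U0|UT] : U = 0%VS \/ U = fullv.
- by apply: Lirr => X x XL /memU Px; apply/memU/PL.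
- by case/negP: wn0; rewrite -memv0 -U0; apply/memU.
- by apply/memU; rewrite UT memvf.
Qed.

Section Commutator.
Variables (K : fieldType) (N : nat).
Implicit Types X A B : 'M[K]_N.

Lemma commDr X A B : comm X (A + B) = comm X A + comm X B.
Proof. by rewrite /comm mulmxDr mulmxDl opprD addrACA. Qed.

Lemma commZr X k A : comm X (k *: A) = k *: comm X A.
Proof. by rewrite /comm -scalemxAr -scalemxAl scalerBr. Qed.

Lemma comm0r X : comm X 0 = 0.
Proof. by rewrite /comm mulmx0 mul0mx subr0. Qed.

Lemma comm_sumr X I (r : seq I) (P : pred I) (F : I -> 'M[K]_N) :
  comm X (\sum_(i <- r | P i) F i) = \sum_(i <- r | P i) comm X (F i).
Proof. exact: (big_morph _ (commDr X) (comm0r X)). Qed.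

Lemma iter_comm_mem (L : {vspace 'M[K]_N}) X Y m :
  lie_subalgebra L -> X \in L -> Y \in L -> iter m (comm X) Y \in L.
Proof. by move=> Lsub XL YL; elim: m => //= m IH; apply: Lsub. Qed.

End Commutator.

Section Symplectic.
Variables (K : numFieldType) (n : nat).
Local Notation N := n.+1.
Local Notation V := 'cV[K]_N.
Local Notation J := (Jmat K N).
Implicit Types (x y a b c u v w : V) (A B X Y Z : 'M[K]_N).

Definition omega x y : K := (x^T *m J *m y) 0 0.

(* The image of the symmetric tensor ab under Sym²V ≅ sp(V), written a⊙b above. *)
Definition sdyad a b : 'M[K]_N := a *m b^T *m J + b *m a^T *m J.

Lemma mulmx_col11 x (c : 'M[K]_1) : x *m c = c 0 0 *: x.
Proof. by rewrite {1}[c]mx11_scalar mul_mx_scalar. Qed.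

Lemma omegaDl x y a : omega (x + y) a = omega x a + omega y a.
Proof. by rewrite /omega linearD /= !mulmxDl mxE. Qed.

Lemma omegaZl k x a : omega (k *: x) a = k * omega x a.
Proof. by rewrite /omega linearZ /= -!scalemxAl mxE. Qed.

Lemma omega0l a : omega 0 a = 0.
Proof. by rewrite /omega trmx0 !mul0mx mxE. Qed.

Lemma omega_suml I (r : seq I) (P : pred I) (F : I -> V) a :
  omega (\sum_(i <- r | P i) F i) a = \sum_(i <- r | P i) omega (F i) a.
Proof. exact: (big_morph (omega^~ a) (fun x y => omegaDl x y a) (omega0l a)). Qed.

Lemma sp_trmxJ X : is_sp X -> X^T *m J = - (J *m X).
Proof. by rewrite /is_sp => /eqP; rewrite addr_eq0 => /eqP. Qed.

Lemma sdyad_apply a b x : sdyad a b *m x = omega b x *: a + omega a x *: b.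
Proof. by rewrite /sdyad mulmxDl -!mulmxA !mulmx_col11 /omega !mulmxA. Qed.

Lemma sdyadC a b : sdyad a b = sdyad b a.
Proof. by rewrite /sdyad addrC. Qed.

Lemma sdyadDl a b c : sdyad (a + b) c = sdyad a c + sdyad b c.
Proof. by rewrite /sdyad linearD /= !mulmxDl !mulmxDr !mulmxDl addrACA. Qed.

Lemma sdyadZl k a c : sdyad (k *: a) c = k *: sdyad a c.
Proof. by rewrite /sdyad linearZ /= -!scalemxAr -!scalemxAl scalerDr. Qed.

Lemma sdyadDr a b c : sdyad c (a + b) = sdyad c a + sdyad c b.
Proof. by rewrite !(sdyadC c) sdyadDl. Qed.

Lemma sdyadZr k a c : sdyad c (k *: a) = k *: sdyad c a.
Proof. by rewrite !(sdyadC c) sdyadZl. Qed.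

Lemma comm_sp_outer X a b : is_sp X ->
  comm X (a *m b^T *m J) = (X *m a) *m b^T *m J + a *m (X *m b)^T *m J.
Proof.
move=> /sp_trmxJ XJ; have JX : J *m X = - (X^T *m J) by rewrite XJ opprK.
by rewrite /comm -!mulmxA JX !mulmxN opprK trmx_mul -!mulmxA !mulmxA.
Qed.

Lemma comm_sdyad X a b : is_sp X ->
  comm X (sdyad a b) = sdyad (X *m a) b + sdyad a (X *m b).
Proof.
move=> spX; rewrite /sdyad commDr !comm_sp_outer //.
by rewrite -!addrA; congr (_ + _); rewrite [RHS]addrC addrA.
Qed.

Lemma iter_comm_sdyad Z a b m : is_sp Z ->
  iter m (comm Z) (sdyad a b) =
  \sum_(j < m.+1) 'C(m, j)%:R *: sdyad (Z ^+ j *m a) (Z ^+ (m - j) *m b).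
Proof.
move=> spZ; elim: m => [|m IH]; first by rewrite big_ord1 bin0 scale1r !mul1mx.
rewrite iterS IH comm_sumr.
under eq_bigr => j _.
  rewrite commZr comm_sdyad // !mulmxA mulmxE -!exprS.
  rewrite -(subSn (ltn_ord j)) -[(m - j)%N]subSS.
  over.
exact: (sum_binomS (fun j => sdyad (Z ^+ j *m a) (Z ^+ (m.+1 - j) *m b))).
Qed.

Lemma sum_sdyad_delta (B : 'M[K]_N) :
  \sum_i \sum_j B i j *: sdyad (delta_mx i 0) (delta_mx j 0) = (B + B^T) *m J.
Proof.
rewrite {2 3}[B]matrix_sum_delta linear_sum /= -big_split /= mulmx_suml.
apply: eq_bigr => i _; rewrite linear_sum /= -big_split /= mulmx_suml.
apply: eq_bigr => j _; rewrite linearZ /= trmx_delta -scalerDr -scalemxAl.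
by rewrite /sdyad !trmx_delta !mul_delta_mx mulmxDl.
Qed.

Hypothesis trJ : J^T = - J.

Lemma omega_antisym x y : omega x y = - omega y x.
Proof.
have -> : omega x y = (x^T *m J *m y)^T 0 0 by rewrite mxE.
by rewrite !trmx_mul trmxK trJ mulNmx mulmxN mxE mulmxA.
Qed.

Lemma omega_xx x : omega x x = 0.
Proof.
have /eqP : omega x x *+ 2 = 0 by rewrite mulr2n {1}omega_antisym addNr.
by rewrite mulrn_eq0 => /eqP.
Qed.

Hypothesis sqrJ : J *m J = - 1%:M.

Lemma Jmat_inj : injective (mulmx J : V -> V).
Proof.
move=> a b /(congr1 (mulmx J)).
by rewrite !mulmxA sqrJ !mulNmx !mul1mx => /oppr_inj.
Qed.

Lemma omega_nondegenerate w : (forall v, omega v w = 0) -> w = 0.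
Proof.
move=> wNdeg; apply: Jmat_inj; rewrite mulmx0; apply/matrixP => i j.
rewrite (ord1 j) [RHS]mxE -(wNdeg (delta_mx i 0)) /omega trmx_delta -mulmxA.
by rewrite -rowE [RHS]mxE.
Qed.

Lemma sp_sub_of_sdyads (U : {vspace 'M[K]_N}) :
  (forall a b, sdyad a b \in U) -> forall X, is_sp X -> X \in U.
Proof.
move=> abU X /sp_trmxJ XJ; set B := - (X *m J).
have JXT : J *m X^T = - (X *m J).
  have : J *m (X^T *m J) *m J = J *m (- (J *m X)) *m J by rewrite XJ.
  rewrite -!mulmxA sqrJ mulmxN mulmx1 mulmxN mulNmx mulmxN !mulmxA sqrJ.
  by rewrite !mulNmx mul1mx opprK => <-; rewrite opprK.
have BT : B^T = B by rewrite linearN /= trmx_mul trJ mulNmx opprK JXT.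
have BJ : B *m J = X by rewrite mulNmx -mulmxA sqrJ mulmxN mulmx1 opprK.
suff : 2%:R *: X \in U by rewrite rpredZeq pnatr_eq0.
rewrite scaler_nat mulr2n -{1 2}BJ -mulmxDl -{2}BT -sum_sdyad_delta.
by apply: rpred_sum => i _; apply: rpred_sum => j _; apply: rpredZ.
Qed.

Lemma rank1_sp_sdyad A : is_sp A -> \rank A = 1%N ->
  exists2 w, w != 0 & exists k, sdyad w w = k *: A.
Proof.
move=> spA rkA.
pose e0 : V := delta_mx 0 0.
have [a [b Aab]] : exists a b : V, A = a *m b^T.
  exists (col_ebase A *m e0), ((row_ebase A)^T *m e0).
  have pid1 : pid_mx 1 = e0 *m e0^T :> 'M_N.
    rewrite /e0 trmx_delta mul_delta_mx; apply/matrixP => i j; rewrite !mxE.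
    congr (_%:R); rewrite -!val_eqE /=.
    by case: i j => [[|i] ?] [[|j] ?] //=; rewrite andbF.
  by rewrite trmx_mul trmxK !mulmxA -(mulmxA _ e0) -pid1 -rkA mulmx_ebase.
have A0 : A != 0 by apply/eqP => A0; move: rkA; rewrite A0 mxrank0.
have an0 : a != 0 by apply: contraNneq A0 => a0; rewrite Aab a0 mul0mx.
have bn0 : b != 0 by apply: contraNneq A0 => b0; rewrite Aab b0 trmx0 mulmx0.
set c := J *m a.
have cn0 : c != 0 by apply: contraNneq an0 => c0; apply/eqP/Jmat_inj; rewrite mulmx0.
have bc_sym : b *m c^T = c *m b^T.
  have := sp_trmxJ spA; rewrite Aab trmx_mul trmxK => E.
  by rewrite /c trmx_mul trJ !mulmxN mulmxA E opprK mulmxA.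
have [i ci0] : exists i, c i 0 != 0.
  by have [i [j cij]] := matrix0Pn _ cn0; exists i; rewrite -(ord1 j).
have : c i 0 *: b = b i 0 *: c.
  have := congr1 (mulmx^~ (delta_mx i 0 : V)) bc_sym.
  rewrite -!mulmxA !mulmx_col11 -scalemxAr.
  by rewrite -!colE !mxE => ->.
set l := b i 0 / c i 0.
move/(canRL (scalerK ci0)); rewrite scalerA mulrC -/l => bl.
have ln0 : l != 0 by apply: contraNneq bn0 => l0; rewrite bl l0 scale0r.
exists a => //; exists (- (l^-1 *+ 2)).
rewrite Aab bl linearZ /= -scalemxAr /c trmx_mul trJ !mulmxN mulmxA !scalerN.
by rewrite scalerA -scaleNr mulNr opprK mulrnAl mulVf // scaler_nat mulr2n.
Qed.

Section Subalgebra.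
Variable L : {vspace 'M[K]_N}.
Hypotheses (Lsub : lie_subalgebra L) (Lsp : forall X, X \in L -> is_sp X).

Lemma sdyad_act_mem w X : sdyad w w \in L -> X \in L -> sdyad w (X *m w) \in L.
Proof.
move=> wwL XL; suff: 2%:R *: sdyad w (X *m w) \in L by rewrite rpredZeq pnatr_eq0.
have <- : comm X (sdyad w w) = 2%:R *: sdyad w (X *m w).
  by rewrite (comm_sdyad _ _ (Lsp XL)) sdyadC scaler_nat mulr2n.
exact: Lsub.
Qed.

Section TwoPoints.
Variables w u : V.
Hypotheses (wwL : sdyad w w \in L) (uuL : sdyad u u \in L) (uwL : sdyad u w \in L).
Hypothesis uw_neq0 : omega u w != 0.

Lemma sdyad_shift a : sdyad w a \in L -> sdyad u a \in L.
Proof.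
move=> waL; set c := omega u w.
suff: (c *+ 2) *: sdyad u a \in L by rewrite rpredZeq mulrn_eq0 (negbTE uw_neq0).
have -> : (c *+ 2) *: sdyad u a =
    comm (sdyad u u) (sdyad w a) - (omega u a *+ 2) *: sdyad w u.
  rewrite (comm_sdyad _ _ (Lsp uuL)) !sdyad_apply -/c.
  by rewrite -!scalerMnl sdyadDl sdyadDr !sdyadZl !sdyadZr !mulr2n addrK.
by rewrite rpredB ?rpredZ ?Lsub // sdyadC.
Qed.

Lemma sdyad_pair_mem a b : sdyad w a \in L -> sdyad w b \in L -> sdyad a b \in L.
Proof.
move=> waL wbL.
suff: omega w u *: sdyad a b \in L.
  by rewrite rpredZeq omega_antisym oppr_eq0 (negbTE uw_neq0).
have -> : omega w u *: sdyad a b = comm (sdyad w a) (sdyad u b)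
    - omega a u *: sdyad w b - omega a b *: sdyad u w - omega w b *: sdyad u a.
  rewrite (comm_sdyad _ _ (Lsp waL)) !sdyad_apply sdyadDl sdyadDr !sdyadZl !sdyadZr.
  move: (sdyad w b) (sdyad a b) (sdyad u w) (sdyad u a) => A B C D.
  by apply/matrixP => i j; rewrite !mxE; ring.
apply: rpredB; last by rewrite rpredZ ?sdyad_shift.
apply: rpredB; last by rewrite rpredZ.
apply: rpredB; last by rewrite rpredZ.
exact: Lsub waL (sdyad_shift wbL).
Qed.

Lemma sdyads_mem : irreducible_action L -> forall a b, sdyad a b \in L.
Proof.
move=> Lirr; suff wvL v : sdyad w v \in L by move=> a b; apply: sdyad_pair_mem.
have wn0 : w != 0.
  by apply: contraNneq uw_neq0 => ->; rewrite /omega mulmx0 mxE.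
apply: (irreducible_pred (P := fun v => sdyad w v \in L)) Lirr _ _ _ wn0 wwL v.
- by rewrite -(scale0r 0) sdyadZr scale0r rpred0.
- by move=> k x y xL yL; rewrite sdyadDr sdyadZr rpredD ?rpredZ.
move=> X x XL wxL.
have -> : sdyad w (X *m x) = comm X (sdyad w x) - sdyad (X *m w) x.
  by rewrite (comm_sdyad _ _ (Lsp XL)) addrAC subrr add0r.
by rewrite rpredB ?Lsub // sdyad_pair_mem ?sdyad_act_mem.
Qed.

End TwoPoints.

Lemma sdyad_orbit_mem w X : sdyad w w \in L -> X \in L ->
  omega (X *m w) w != 0 -> sdyad (X *m w) (X *m w) \in L.
Proof.
move=> wwL XL; set u := X *m w; set c := omega u w => cn0.
have uwL : sdyad u w \in L by rewrite sdyadC sdyad_act_mem.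
set h := sdyad u w; set z := X *m u.
have hw : h *m w = c *: w by rewrite sdyad_apply omega_xx scale0r add0r.
have hu : h *m u = - c *: u.
  by rewrite sdyad_apply omega_xx scale0r addr0 omega_antisym.
have hzL : sdyad (h *m z) w \in L.
  by rewrite sdyad_apply sdyadDl !sdyadZl rpredD ?rpredZ.
suff: (c *+ 3) *: sdyad u u \in L by rewrite rpredZeq mulrn_eq0 (negbTE cn0).
have -> : (c *+ 3) *: sdyad u u =
    c *: comm X h - comm h (comm X h) + sdyad (h *m z) w.
  rewrite [comm X h](comm_sdyad _ _ (Lsp XL)) commDr.
  rewrite !(comm_sdyad _ _ (Lsp uwL)) hw hu sdyadZl !sdyadZr.
  move: (sdyad z w) (sdyad u u) (sdyad (h *m z) w) => A B C.
  by apply/matrixP => i j; rewrite !mxE; ring.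
by rewrite rpredD // rpredB ?rpredZ ?Lsub.
Qed.

Section IsotropicOrbit.
Variable w : V.
Hypothesis wwL : sdyad w w \in L.

Definition wform X := omega (X *m w) w.

Hypothesis wform_L : forall X, X \in L -> wform X = 0.

Lemma wformD X Y : wform (X + Y) = wform X + wform Y.
Proof. by rewrite /wform mulmxDl omegaDl. Qed.

Lemma wformZ k X : wform (k *: X) = k * wform X.
Proof. by rewrite /wform -scalemxAl omegaZl. Qed.

Lemma wform_sum I (r : seq I) (P : pred I) (F : I -> 'M[K]_N) :
  wform (\sum_(i <- r | P i) F i) = \sum_(i <- r | P i) wform (F i).
Proof. by rewrite /wform mulmx_suml omega_suml. Qed.

Lemma wform_sdyad X Y : wform (sdyad (X *m w) (Y *m w)) = (wform X * wform Y) *+ 2.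
Proof. by rewrite /wform sdyad_apply omegaDl !omegaZl mulrC mulr2n. Qed.

Lemma wform_expr_eq0 Z k : Z \in L ->
  (forall i, (i < k)%N -> wform (Z ^+ i) = 0) -> wform (Z ^+ k) = 0.
Proof.
(* In ad_Z^(2k) (w⊙w), every term but the middle one has a factor
   [wform (Z ^+ i)] with i < k. *)
move=> ZL low; have := wform_L (iter_comm_mem (k + k) Lsub ZL wwL).
rewrite (iter_comm_sdyad _ _ _ (Lsp ZL)) wform_sum.
under eq_bigr do rewrite wformZ wform_sdyad.
have kk : (k < (k + k).+1)%N by rewrite ltnS leq_addr.
rewrite (bigD1 (Ordinal kk)) //= big1 ?addr0 => [|j]; last first.
  rewrite -val_eqE /= => jNk; have := ltn_ord j.
  have [jk|kj|jk] := ltngtP j k; last by rewrite jk eqxx in jNk.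
  - by rewrite low // mul0r mul0rn mulr0.
  - by move=> ?; rewrite [wform (Z ^+ (_ - j))]low ?mulr0 ?mul0rn ?mulr0 //; lia.
move=> /eqP; rewrite addnK mulf_eq0 pnatr_eq0 eqn0Ngt bin_gt0 leq_addr /=.
by rewrite mulrn_eq0 /= mulf_eq0 orbb => /eqP.
Qed.

(* Modulo words of length < k, the letters of a word of length k commute. *)
Section Words.
Variable k : nat.
Hypothesis short_words : forall s, all (mem L) s -> (size s < k)%N ->
  wform (\prod_(X <- s) X) = 0.

Lemma wform_swap p q X Y : all (mem L) (p ++ X :: Y :: q) ->
  size (p ++ X :: Y :: q) = k ->
  wform (\prod_(M <- p ++ X :: Y :: q) M) = wform (\prod_(M <- p ++ Y :: X :: q) M).
Proof.
rewrite all_cat /= => /andP [pL /and3P [XL YL qL]] size_k.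
have -> : \prod_(M <- p ++ X :: Y :: q) M =
    \prod_(M <- p ++ Y :: X :: q) M + \prod_(M <- p ++ comm X Y :: q) M.
  rewrite !big_cat !big_cons /= /comm !mulmxE mulrBl mulrBr !mulrA.
  by rewrite addrC subrK.
rewrite wformD [wform (\prod_(M <- _ ++ comm X Y :: _) M)]short_words ?addr0 //.
  by rewrite all_cat /= pL qL Lsub.
by move: size_k; rewrite !size_cat /= => <-; rewrite ltn_add2l.
Qed.

Lemma wform_move t1 p X t2 : all (mem L) (p ++ X :: t1 ++ t2) ->
  size (p ++ X :: t1 ++ t2) = k ->
  wform (\prod_(M <- p ++ X :: t1 ++ t2) M) =
  wform (\prod_(M <- p ++ t1 ++ X :: t2) M).
Proof.
elim: t1 p => [//|y t1 IH] p /= pL size_k.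
rewrite wform_swap // -![p ++ y :: _]cat_rcons IH // cat_rcons.
  by move: pL; rewrite !all_cat /= => /and4P [-> -> -> ->].
by rewrite -size_k !size_cat.
Qed.

Lemma wform_perm s p t : all (mem L) (p ++ s) -> size (p ++ s) = k ->
  perm_eq s t -> wform (\prod_(M <- p ++ s) M) = wform (\prod_(M <- p ++ t) M).
Proof.
elim: s p t => [|x s IH] p t pL size_k; first by move/perm_size/esym/size0nil ->.
move=> st; have xt : x \in t by rewrite -(perm_mem st) mem_head.
case/splitPr: xt st => t1 t2 st.
have {}st : perm_eq s (t1 ++ t2).
  by rewrite -(perm_cons x) (perm_trans st) // -cat1s perm_catCA.
rewrite -cat_rcons (IH _ (t1 ++ t2)) ?cat_rcons // wform_move //.
  by move: pL; rewrite !all_cat /= (perm_all _ st) all_cat.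
by rewrite -size_k !size_cat /= (perm_size st) size_cat.
Qed.

Lemma wform_prod_eq0 : (forall Z, Z \in L -> wform (Z ^+ k) = 0) ->
  forall X : 'I_k -> 'M[K]_N, (forall i, X i \in L) -> wform (\prod_(j < k) X j) = 0.
Proof.
move=> powers X XL; have := congr1 wform (polarization X).
rewrite !wform_sum big1 => [|E _]; last first.
  by rewrite wformZ powers ?mulr0 //; apply: rpred_sum => i _.
have prodE (F : 'I_k -> 'M[K]_N) :
  \prod_(j < k) F j = \prod_(M <- [seq F j | j <- index_enum 'I_k]) M.
  by rewrite big_map.
rewrite (eq_bigr (fun=> wform (\prod_(j < k) X j))) => [|f ontof]; last first.
  rewrite !prodE; apply: (wform_perm (p := [::])) => /=.
  - by rewrite all_map; apply/allP => j _; apply: XL.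
  - by rewrite size_map [index_enum _]unlock -enumT size_enum_ord.
  - by rewrite (map_comp X f) perm_map // perm_map_onto.
rewrite (eq_bigl [in [pred f : {ffun 'I_k -> 'I_k} | f @: setT == setT]]) //.
rewrite sumr_const => /eqP; rewrite eq_sym mulrn_eq0 => /orP [|/eqP //].
rewrite eqn0Ngt => /negP []; apply/card_gt0P; exists [ffun j => j]; rewrite inE.
by apply/eqP/setP => j; rewrite inE; apply/imsetP; exists j; rewrite ?ffunE.
Qed.

End Words.

Lemma wform_words_eq0 s : all (mem L) s -> wform (\prod_(X <- s) X) = 0.
Proof.
move: {2}(size s) (erefl (size s)) => k; elim/ltn_ind: k s => k IH s size_s sL.
have short t : all (mem L) t -> (size t < k)%N -> wform (\prod_(X <- t) X) = 0.
  by move=> tL /IH; apply.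
have powers Z : Z \in L -> wform (Z ^+ k) = 0.
  move=> ZL; apply: wform_expr_eq0 => // i ik.
  have -> : Z ^+ i = \prod_(X <- nseq i Z) X by rewrite big_nseq iter_mulr_1.
  by rewrite short ?size_nseq //; apply/allP => Y /nseqP [-> _].
rewrite (big_nth 0) size_s big_mkord; apply: wform_prod_eq0 short powers _ _ => j.
by apply: (allP sL); rewrite mem_nth ?size_s.
Qed.

Lemma isotropic_orbit_reducible : w != 0 -> ~ irreducible_action L.
Proof.
move=> wn0 Lirr.
suff orbit_w v s : all (mem L) s -> omega ((\prod_(X <- s) X) *m v) w = 0.
  case/negP: wn0; apply/eqP/omega_nondegenerate => v.
  by have := orbit_w v [::] isT; rewrite big_nil mul1mx.
move: s; apply: (irreducible_pred (P := fun v => forall s, all (mem L) s ->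
  omega ((\prod_(X <- s) X) *m v) w = 0)) Lirr _ _ _ wn0 _ v.
- by move=> s _; rewrite mulmx0 omega0l.
- move=> k x y Px Py s sL.
  by rewrite mulmxDr -scalemxAr omegaDl omegaZl Px ?Py ?mulr0 ?addr0.
- move=> X x XL Px s sL.
  have -> : (\prod_(M <- s) M) *m (X *m x) = (\prod_(M <- rcons s X) M) *m x.
    by rewrite mulmxA -cats1 big_cat big_seq1 mulmxE.
  by apply: Px; rewrite all_rcons; apply/andP.
- exact: wform_words_eq0.
Qed.

End IsotropicOrbit.

Lemma sp_sub_irreducible_rank1 : irreducible_action L ->
  (exists2 A, A \in L & \rank A = 1%N) -> forall X, is_sp X -> X \in L.
Proof.
move=> Lirr [A AL rkA].
have [w wn0 [k wwA]] := rank1_sp_sdyad (Lsp AL) rkA.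
have wwL : sdyad w w \in L by rewrite wwA rpredZ.
have [[X XL Xw_neq0] | isotropic] :=
  classic (exists2 X, X \in L & omega (X *m w) w != 0).
  apply: sp_sub_of_sdyads; apply: (sdyads_mem wwL _ _ Xw_neq0 Lirr).
    exact: sdyad_orbit_mem.
  by rewrite sdyadC sdyad_act_mem.
exfalso; apply: (isotropic_orbit_reducible wwL _ wn0 Lirr) => X XL.
by apply/eqP/negPn/negP => Xw_neq0; apply: isotropic; exists X.
Qed.

End Subalgebra.

End Symplectic.

Lemma trmx_Jmat (K : fieldType) N : (0 < N./2)%N -> (Jmat K N)^T = - Jmat K N.
Proof.
move=> N2_gt0; apply/matrixP => i j; rewrite !mxE.
have [eij|nij] := eqVneq (i : nat) (j + N./2)%N.
  by rewrite ifN ?opprK //; apply/negP => /eqP; lia.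
by case: eqP; rewrite ?oppr0.
Qed.

Lemma Jmat_sqr (K : fieldType) N : ~~ odd N -> Jmat K N *m Jmat K N = - 1%:M.
Proof.
move=> evenN; set h := N./2.
have hN : N = (h + h)%N by rewrite -[LHS]odd_double_half (negbTE evenN) add0n -addnn.
apply/matrixP => i k; rewrite !mxE -/h.
have ilt := ltn_ord i; have klt := ltn_ord k.
have -> : (1 *- (i == k) : K) = if (i : nat) == k then -1 else 0.
  by rewrite -(inj_eq val_inj) /=; case: (_ == _); rewrite ?mulr1n ?mulr0n ?oppr0.
case: (ltnP i h) => ih.
  have j0lt : (i + h < N)%N by lia.
  rewrite (bigD1 (Ordinal j0lt)) //= big1 ?addr0; last first.
    move=> j; rewrite -(inj_eq val_inj) /= => jn.
    rewrite !mxE -/h (negbTE jn); case: eqP => [?|_]; first lia.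
    by rewrite mul0r.
  rewrite !mxE -/h /= eqxx mul1r.
  case: eqP => [?|_]; first lia.
  case: (eqVneq (i + h)%N (k + h)%N) => e.
    by rewrite (_ : (i : nat) == k) //; apply/eqP; lia.
  by rewrite (_ : ((i : nat) == k) = false) //; apply/eqP; lia.
have j0lt : (i - h < N)%N by lia.
rewrite (bigD1 (Ordinal j0lt)) //= big1 ?addr0; last first.
  move=> j; rewrite -(inj_eq val_inj) /= => /eqP jn; have jlt := ltn_ord j.
  rewrite !mxE -/h; case: eqP => [?|_]; first lia.
  case: eqP => [?|_]; first lia.
  by rewrite mul0r.
rewrite !mxE -/h /=; case: eqP => [?|_]; first lia.
rewrite (_ : ((i : nat) == (i - h) + h)%N) ?mulN1r; last by apply/eqP; lia.
case: eqP => [e|ne].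
  by rewrite (_ : (i : nat) == k) //; apply/eqP; lia.
case: eqP => [?|_]; first lia.
by rewrite (_ : ((i : nat) == k) = false) ?oppr0 //; apply/eqP; lia.
Qed.

Lemma sp_sub_irreducible_rank1_even (K : numFieldType) N (L : {vspace 'M[K]_N}) :
  (0 < N)%N -> ~~ odd N ->
  lie_subalgebra L -> (forall X, X \in L -> is_sp X) -> irreducible_action L ->
  (exists2 A, A \in L & \rank A = 1%N) -> forall X, is_sp X -> X \in L.
Proof.
case: N L => [//|[//|n]] L _ evenN.
apply: (sp_sub_irreducible_rank1 (@trmx_Jmat K n.+2 (ltn0Sn _)) (Jmat_sqr K evenN)).
Qed.

Theorem theorem3p3 :
  exists g0 : nat,
  forall (R : realType) (g : nat) (L : {vspace 'M[complex R]_(4 * g - 4)}),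
    (g0 <= g)%N ->
    lie_subalgebra L ->
    lie_semisimple L ->
    (forall X, X \in L -> is_sp X) ->
    (forall X : 'M[complex R]_(2 * (g - 5)), is_sp X -> emb (4 * g - 4) X \in L) ->
    irreducible_action L ->
    (exists A, A \in L /\ nilpotent_mx A /\ \rank A = 1%N) ->
    forall X, X \in L <-> is_sp X.
Proof.
exists 2%N => R g L g_ge2 Lsub _ Lsp _ Lirr [A [AL [_ rkA]]] X.
split; first exact: Lsp.
apply: sp_sub_irreducible_rank1_even => //; last by exists A.
- by lia.
- by rewrite (_ : (4 * g - 4 = (2 * g - 2).*2)%N) ?odd_double // -addnn; lia.
Qed.
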